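(* Let $n\ge 1$, let $C_u(v_1),\ldots,C_u(v_n)>0$ and $R_1,\ldots,R_n>0$ be sustainable, i.e. $R_i\le C_u(v_i)$ for all $i$, $\sum_{j\ne i}R_j\le C_d(v_i)$ for all $i$ (for some downlink capacities $C_d(v_i)>0$), and $(n-1)\sum_{i=1}^n R_i\le\sum_{i=1}^n C_u(v_i)$. Run the algorithm described in the context on these inputs. Then $U_i[\alpha]\ge 0$ for all $i,\alpha$ with $1\le i,\alpha\le n$.
   Context: Sub-stream rate assigning algorithm. Input: $n$, uplink capacities $C_u(v_1),\ldots,C_u(v_n)$ and rates $R_1,\ldots,R_n$. Initialize $r_{i,j}:=0$ for all $1\le i,j\le n$ and $U_i := C_u(v_i)-R_i$ for $1\le i\le n$. Outer loop: for $i=1$ to $n$: set $R'_i := R_i$; inner loop: for $j=1$ to $n$: if $(n-2)R'_i > U_j$ then set $r_{i,j} := U_j/(n-2)$, else set $r_{i,j} := R'_i$; then set $U_j := U_j-(n-2)r_{i,j}$ and $R'_i := R'_i - r_{i,j}$; if $R'_i = 0$, exit the inner loop. Output all $r_{i,j}$. Notation: $U_i[\alpha]$ denotes the value of the variable $U_i$ at the start of iteration $\alpha$ of the outer loop. *)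

From mathcomp Require Import all_boot all_order all_algebra.
Set Implicit Arguments. Unset Strict Implicit. Unset Printing Implicit Defensive.
Import Order.TTheory GRing.Theory Num.Theory.
Local Open Scope ring_scope.

(* Sub-stream rate assigning algorithm. Peers v_1..v_n are indexed by 'I_n
   (0-based). The algorithm's variables U_j are stored as a function
   'I_n -> R.  The real constant (n-2) is (n%:R - 2). *)

Section Algo.
Variable (R : realFieldType) (n : nat).

Definition nm2 : R := n%:R - 2.

Definition inner_r (U : 'I_n -> R) (Rp : R) (j : 'I_n) : R :=
  if nm2 * Rp > U j then U j / nm2 else Rp.

Definition inner_step (U : 'I_n -> R) (Rp : R) (j : 'I_n) : ('I_n -> R) * R :=
  let r := inner_r U Rp j in
  ((fun k => if k == j then U j - nm2 * r else U k), Rp - r).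

Fixpoint inner_loop (U : 'I_n -> R) (Rp : R) (s : seq 'I_n) : 'I_n -> R :=
  match s with
  | [::] => U
  | j :: s' =>
      let p := inner_step U Rp j in
      if p.2 == 0 then p.1 else inner_loop p.1 p.2 s'
  end.

Definition outer_step (Rt : 'I_n -> R) (U : 'I_n -> R) (i : 'I_n) : 'I_n -> R :=
  inner_loop U (Rt i) (enum 'I_n).

(* Value of the U-vector after the first k outer iterations, starting from
   U_i := C_u(v_i) - R_i.  Hence U_i[alpha] = U_after Cu Rt (alpha-1) i. *)
Definition U_after (Cu Rt : 'I_n -> R) (k : nat) : 'I_n -> R :=
  foldl (outer_step Rt) (fun i => Cu i - Rt i) (take k (enum 'I_n)).

End Algo.

From mathcomp Require Import all_boot all_order all_algebra.
Import Order.TTheory GRing.Theory Num.Theory.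
Local Open Scope ring_scope.

(* Nonnegativity of the vector U is an invariant of the algorithm: an inner
   step either sets U_j to exactly 0 (when r_{i,j} = U_j/(n-2)) or subtracts
   (n-2) R'_i, which is then at most U_j.  Initially U_i = C_u(v_i) - R_i >= 0,
   so of the sustainability hypotheses only R_i <= C_u(v_i) is needed. *)

Section Nonnegativity.
Variables (R : realFieldType) (n : nat).
Implicit Types (U : 'I_n -> R) (Rp : R) (j : 'I_n) (s : seq 'I_n).

Lemma subr_inner_r_ge0 U Rp j : 0 <= U j -> 0 <= U j - nm2 R n * inner_r U Rp j.
Proof.
move=> U_ge0; rewrite /inner_r; case: ltP => [_|le_U]; last by rewrite subr_ge0.
have [->|nm2_neq0] := eqVneq (nm2 R n) 0; first by rewrite mul0r subr0.
by rewrite mulrC divfK // subrr.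
Qed.

Lemma inner_step_ge0 U Rp j :
  (forall k, 0 <= U k) -> forall k, 0 <= (inner_step U Rp j).1 k.
Proof.
move=> U_ge0 k /=; case: eqP => // _.
exact: subr_inner_r_ge0.
Qed.

Lemma inner_loop_ge0 s U Rp :
  (forall k, 0 <= U k) -> forall k, 0 <= inner_loop U Rp s k.
Proof.
elim: s U Rp => [|j s IHs] U Rp U_ge0 //=.
case: ifP => _; first exact: inner_step_ge0.
exact/IHs/inner_step_ge0.
Qed.

Lemma foldl_outer_step_ge0 (Rt : 'I_n -> R) s U :
  (forall k, 0 <= U k) -> forall k, 0 <= foldl (outer_step Rt) U s k.
Proof.
elim: s U => [|j s IHs] U U_ge0 //=.
exact/IHs/inner_loop_ge0.
Qed.

Lemma U_after_ge0 (Cu Rt : 'I_n -> R) :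
  (forall i, Rt i <= Cu i) -> forall k i, 0 <= U_after Cu Rt k i.
Proof.
move=> Rt_le_Cu k; apply: foldl_outer_step_ge0 => i.
by rewrite subr_ge0.
Qed.

End Nonnegativity.

Theorem lemmaB4 (R : realFieldType) (n : nat) (Cu Rt : 'I_n -> R) :
  (1 <= n)%N ->
  (forall i, 0 < Cu i) ->
  (forall i, 0 < Rt i) ->
  (forall i, Rt i <= Cu i) ->
  (exists Cd : 'I_n -> R,
      (forall i, 0 < Cd i) /\ (forall i, \sum_(j | j != i) Rt j <= Cd i)) ->
  (n%:R - 1) * \sum_i Rt i <= \sum_i Cu i ->
  forall (alpha : nat), (1 <= alpha <= n)%N ->
  forall i : 'I_n, 0 <= U_after Cu Rt alpha.-1 i.
Proof.
move=> _ _ _ Rt_le_Cu _ _ alpha _.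
exact: U_after_ge0.
Qed.
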